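(* Let $\underline{t}$ and $\underline{u}$ be increment arrays of the same size $s$ for $n$ agents with $\underline{t}\approx\underline{u}$. Then \[\bigcup_{i=1}^{n}\{C(i,\underline{t})\}=\bigcup_{i=1}^{n}\{C(i,\underline{u})\},\] i.e.\ the set of coalitions generated by $\underline{t}$ from all starting agents equals the set generated by $\underline{u}$ from all starting agents.
   Context: Agent identifiers are $\{1,\ldots,n\}$, arithmetic on identifiers is modulo $n$ with representatives in $\{1,\ldots,n\}$ (a value $0$ is replaced by $n$). An increment array (IA) of size $s$ ($1\le s\le n$) for $n$ agents is a tuple $\underline{t}=\langle t_0,\ldots,t_{s-1}\rangle$ of non-negative integers with $\sum t_i=n-s$. Cumulative increments: $\varphi_1=0$, $\varphi_i=\sum_{k=0}^{i-2}(t_k+1)$ for $2\le i\le s+1$. The coalition generated from $x$ is $C(x,\underline{t})=\{x\}\cup\bigcup_{i=2}^{s}\{(x+\varphi_i)\bmod n\}$ (residues in $\{1,\ldots,n\}$). Two IAs of the same size are equivalent, $\underline{t}\approx\underline{u}$, if $\underline{u}$ is a circular shift of $\underline{t}$: there is $0\le k\le s-1$ with $\langle u_0,\ldots,u_{s-1}\rangle=\langle t_k,\ldots,t_{s-1},t_0,\ldots,t_{k-1}\rangle$. *)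

From mathcomp Require Import all_boot.
Set Implicit Arguments. Unset Strict Implicit. Unset Printing Implicit Defensive.

Definition rep (n x : nat) : nat := if x %% n == 0 then n else x %% n.

Definition is_IA (n s : nat) (t : seq nat) : Prop :=
  [/\ 1 <= s <= n, size t = s & sumn t = n - s].

Definition phi (t : seq nat) (i : nat) : nat :=
  \sum_(0 <= k < i.-1) (nth 0 t k).+1.

Definition coalition (n : nat) (t : seq nat) (x : nat) : seq nat :=
  x :: [seq rep n (x + phi t i) | i <- iota 2 (size t).-1].

Definition ia_equiv (t u : seq nat) : Prop :=
  size t = size u /\ exists2 k, k <= (size t).-1 & u = rot k t.

From mathcomp Require Import all_boot.
From mathcomp Require Import zify.

Set Implicit Arguments.
Unset Strict Implicit.
Unset Printing Implicit Defensive.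

(* Write P_m = sum_{k<m} (t_k + 1) = phi_{m+1} for the partial sums of t, so that the
   coalition C(x,t) is the set of residues of x + P_m, m < s, and P_s = n.
   The partial sums of the rotation rot k t are P_{k+m} - P_k with the index
   k + m read modulo s, hence modulo n they are the P_m shifted by -P_k.  So
   C(x,t) = C(x + P_k, rot k t), and since x |-> x + P_k permutes the agents,
   both families of coalitions coincide. *)

Definition psum (t : seq nat) (m : nat) : nat := \sum_(0 <= k < m) (nth 0 t k).+1.

Lemma psum0 t : psum t 0 = 0.
Proof. by rewrite /psum big_geq. Qed.

Lemma psum_size t : psum t (size t) = sumn t + size t.
Proof.
elim: t => [|a t IHt]; first by rewrite psum0.
by rewrite /psum big_nat_recl //= -/(psum t (size t)) IHt addSn addnS addnA.
Qed.

Lemma psum_catl t1 t2 m : m <= size t1 -> psum (t1 ++ t2) m = psum t1 m.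
Proof.
move=> le_m_t1; apply: eq_big_nat => k /andP[_ lt_k_m].
by rewrite nth_cat (leq_trans lt_k_m le_m_t1).
Qed.

Lemma psum_catr t1 t2 m :
  psum (t1 ++ t2) (size t1 + m) = psum t1 (size t1) + psum t2 m.
Proof.
rewrite /psum (@big_cat_nat _ _ _ (size t1)) ?leq_addr //=.
rewrite -/(psum _ _) psum_catl // -{2}[size t1]add0n big_addn addKn.
congr (_ + _); apply: eq_bigr => k _.
by rewrite nth_cat ltnNge leq_addl addnK.
Qed.

Lemma psum_rot t k m : k <= size t -> m <= size t ->
  psum t k + psum (rot k t) m = psum (t ++ t) (k + m).
Proof.
move=> le_k_t le_m_t.
have -> : t ++ t = take k t ++ (rot k t ++ drop k t).
  by rewrite /rot -!catA cat_take_drop catA cat_take_drop.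
have psum_take : psum (take k t) k = psum t k.
  by rewrite -{2}(cat_take_drop k t) psum_catl ?size_takel.
rewrite -[k in k + m](size_takel le_k_t) psum_catr (size_takel le_k_t) psum_take.
by rewrite psum_catl ?size_rot.
Qed.

Lemma psum_rot_mod t k m : k < size t -> m < size t ->
  psum t k + psum (rot k t) m = psum t ((k + m) %% size t) %[mod psum t (size t)].
Proof.
move=> lt_k_t lt_m_t; rewrite psum_rot; [|exact: ltnW..].
have [lt_km_t | le_t_km] := ltnP (k + m) (size t).
  by rewrite [(k + m) %% _]modn_small // psum_catl ?(ltnW lt_km_t).
have km_split : k + m = size t + (k + m - size t) by rewrite subnKC.
have lt_r_t : k + m - size t < size t by lia.
by rewrite km_split psum_catr modnDl [(size t + _) %% _]modnDl (modn_small lt_r_t).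
Qed.

Lemma modn_addl_onto s k j : k < s -> j < s ->
  exists2 m, m < s & (k + m) %% s = j.
Proof.
move=> lt_k_s lt_j_s; have s_gt0 : 0 < s := leq_ltn_trans (leq0n k) lt_k_s.
exists ((j + (s - k)) %% s); first exact: ltn_pmod.
by rewrite modnDmr addnCA subnKC ?modnDr ?modn_small // ltnW.
Qed.

Lemma rep_modn n a : rep n a = a %[mod n].
Proof. by rewrite /rep; case: eqP => [->|_]; rewrite ?modnn ?modn_mod. Qed.

Lemma eq_rep n a b : a = b %[mod n] -> rep n a = rep n b.
Proof. by rewrite /rep => ->. Qed.

Lemma rep_range n a : 0 < n -> 0 < rep n a <= n.
Proof.
move=> n_gt0; rewrite /rep; case: eqP => [_|a_n_neq0]; first by rewrite n_gt0 leqnn.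
by rewrite lt0n ltnW ?ltn_pmod // andbT; apply/eqP.
Qed.

Lemma rep_id n x : 0 < x <= n -> rep n x = x.
Proof.
case/andP=> x_gt0; rewrite leq_eqVlt => /orP[/eqP-> | lt_x_n].
  by rewrite /rep modnn eqxx.
by rewrite /rep modn_small // eqn0Ngt x_gt0.
Qed.

Lemma rep_addr_onto n a j : 0 < j <= n ->
  exists2 x, 0 < x <= n & rep n (x + a) = j.
Proof.
move=> j_range; have n_gt0 : 0 < n by lia.
exists (rep n (j + (n - a %% n))); first exact: rep_range.
rewrite -[RHS](rep_id j_range); apply: eq_rep.
rewrite -modnDml rep_modn modnDml -modnDmr -addnA subnK ?modnDr //.
exact/ltnW/ltn_pmod.
Qed.

Lemma coalitionE n t x : 0 < size t -> 0 < x <= n ->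
  coalition n t x = [seq rep n (x + psum t m) | m <- iota 0 (size t)].
Proof.
case: t => [|a t'] //= _ x_range.
rewrite /coalition psum0 addn0 rep_id // -[2]/(1 + 1) iotaDl -map_comp.
by congr (_ :: _); apply: eq_map => m.
Qed.

Lemma coalition_rot n t k x : psum t (size t) = n -> k < size t -> 0 < x <= n ->
  coalition n (rot k t) (rep n (x + psum t k)) =i coalition n t x.
Proof.
move=> psum_t lt_k_t x_range.
have t_gt0 : 0 < size t by lia.
have n_gt0 : 0 < n by lia.
have shift m : m < size t -> rep n (rep n (x + psum t k) + psum (rot k t) m)
                             = rep n (x + psum t ((k + m) %% size t)).
  move=> lt_m_t; apply: eq_rep.
  rewrite -modnDml rep_modn modnDml -addnA; apply/eqP.
  by rewrite eqn_modDl -psum_t; apply/eqP/psum_rot_mod.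
rewrite !coalitionE ?size_rot ?rep_range // => z.
apply/mapP/mapP => [[m] | [j]]; rewrite mem_iota add0n => /andP[_ lt_m_t] ->.
- exists ((k + m) %% size t); last exact: shift.
  by rewrite mem_iota ltn_pmod.
- have [m lt_m_t' <-] := modn_addl_onto lt_k_t lt_m_t.
  by exists m; rewrite ?mem_iota ?size_rot ?shift.
Qed.

Theorem lemma3 (n s : nat) (t u : seq nat) :
  is_IA n s t -> is_IA n s u -> ia_equiv t u ->
  (forall i, 1 <= i <= n -> exists2 j, 1 <= j <= n &
     coalition n t i =i coalition n u j) /\
  (forall j, 1 <= j <= n -> exists2 i, 1 <= i <= n &
     coalition n u j =i coalition n t i).
Proof.
move=> [/andP[s_gt0 le_s_n] size_t sum_t] _ [_ [k le_k_s ->]].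
have lt_k_t : k < size t by lia.
have psum_t : psum t (size t) = n by rewrite psum_size; lia.
have n_gt0 : 0 < n by lia.
split=> [i i_range | j j_range].
- exists (rep n (i + psum t k)); first exact: rep_range.
  by move=> z; rewrite coalition_rot.
- have [i i_range <-] := rep_addr_onto (psum t k) j_range.
  by exists i => // z; rewrite coalition_rot.
Qed.
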